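(* Let $k$ be an infinite $C_1$-field with $\operatorname{char} k\neq 2$ which is not algebraically closed. Let $a,b,c,d\in k$ with $a\in k\setminus k^2$, $b\neq 0$, and at least one of $c,d$ non-zero, and let $L_0=k(t_1,t_2,t_3,t_4)$ be a field extension of $k$ with $\operatorname{trdeg}_k(L_0)=2$ whose generators satisfy $t_1^2-at_2^2=b$ and $t_3^2-at_4^2=2ct_1+d$. Then $L_0$ is $k$-rational.
   Context: A field $k$ is a $C_1$-field if every homogeneous polynomial $f\in k[x_1,\dots,x_n]$ of degree less than $n$ has a non-trivial zero in $k^n$. A field extension is $k$-rational if it is purely transcendental over $k$. *)

From HB Require Import structures.
From mathcomp Require Import all_boot all_order all_algebra.
From mathcomp Require Import mpoly.
Set Implicit Arguments. Unset Strict Implicit. Unset Printing Implicit Defensive.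
Import Order.TTheory GRing.Theory.
Local Open Scope ring_scope.

Definition C1_field (k : fieldType) : Prop :=
  forall (n d : nat) (f : {mpoly k[n]}),
    (0 < d)%N -> (d < n)%N -> f \is d.-homog ->
    exists v : 'I_n -> k, (exists i, v i != 0) /\ f.@[v] = 0.

Definition infinite_field (k : fieldType) : Prop :=
  forall s : seq k, exists x : k, x \notin s.

(* Extensions of k are fields L with a ring morphism iota : k -> L. *)

Definition alg_indep (k L : fieldType) (iota : {rmorphism k -> L})
    (n : nat) (x : 'I_n -> L) : Prop :=
  forall p : {mpoly k[n]}, (map_mpoly iota p).@[x] = 0 -> p = 0.

Definition generates (k L : fieldType) (iota : {rmorphism k -> L})
    (n : nat) (x : 'I_n -> L) : Prop :=
  forall y : L, exists p q : {mpoly k[n]},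
    (map_mpoly iota q).@[x] != 0 /\
    y = (map_mpoly iota p).@[x] / (map_mpoly iota q).@[x].

Definition trdeg_eq (k L : fieldType) (iota : {rmorphism k -> L}) (m : nat) : Prop :=
  (exists x : 'I_m -> L, alg_indep iota x) /\
  (forall (n : nat) (x : 'I_n -> L), alg_indep iota x -> (n <= m)%N).

Definition k_rational (k L : fieldType) (iota : {rmorphism k -> L}) : Prop :=
  exists (n : nat) (x : 'I_n -> L), alg_indep iota x /\ generates iota x.

From HB Require Import structures.
From mathcomp Require Import all_boot all_order all_algebra.
From mathcomp Require Import mpoly.
From mathcomp Require Import ring zify.
Import GRing.Theory.
Set Implicit Arguments. Unset Strict Implicit. Unset Printing Implicit Defensive.
Local Open Scope ring_scope.

(* Over the C_1 field k the norm form x^2 - a y^2 represents every non-zero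
   element.  This gives a point (x0, y0) of the conic x^2 - a y^2 = b with
   A := 2 c x0 + d <> 0, and a point (X1, Y1) of norm A.  Projecting the conic
   from (x0, y0) makes t1 and t2 rational in the slope s.  With r a square root
   of a, z1 + z2 r := (t3 + t4 r) (s + r) / (X1 + Y1 r) has norm
   z1^2 - a z2^2 = (s + B)^2 + D for constants B and D, so that
   (z1 - s - B) M = a z2^2 + D for M := z1 + s + B, and L = k(M, z2).
   What makes this work, and rules out the degenerate cases t2 = -y0 and
   M = 0, is that two generators z of a field of transcendence degree 2 are
   algebraically independent: if Q(z) = 0 with Q <> 0 and y_l = p_l(z) / q_l(z)
   for independent y_0, y_1, the polynomials p0^i q0^(N-i) p1^j q1^(N-j) and
   Q X^m of bounded degree outnumber the monomials of that degree, and a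
   linear relation among them evaluates at z to a relation between y_0, y_1. *)

Section RationalFunctions.
Variables (k L : fieldType) (iota : {rmorphism k -> L}).

Section Evaluation.
Variables (n : nat) (z : 'I_n -> L).

Definition kmeval (p : {mpoly k[n]}) : L := (map_mpoly iota p).@[z].

HB.instance Definition _ :=
  GRing.RMorphism.copy kmeval (meval z \o map_mpoly iota).

Lemma kmevalC c : kmeval c%:MP = iota c.
Proof. by rewrite /kmeval map_mpolyC mevalC. Qed.

Lemma kmevalXU i : kmeval 'X_i = z i.
Proof. by rewrite /kmeval map_mpolyX mevalXU. Qed.

Lemma kmevalZ c p : kmeval (c *: p) = iota c * kmeval p.
Proof. by rewrite /kmeval map_mpolyZ mevalZ. Qed.

Lemma kmevalX m : kmeval 'X_[m] = \prod_(i < n) z i ^+ m i.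
Proof. by rewrite /kmeval map_mpolyX mevalX. Qed.

Definition rational_in (y : L) :=
  exists p q : {mpoly k[n]}, kmeval q != 0 /\ y = kmeval p / kmeval q.

Lemma rational_in_kmeval p : rational_in (kmeval p).
Proof. by exists p, 1; rewrite rmorph1 oner_eq0 divr1. Qed.

Lemma rational_inC c : rational_in (iota c).
Proof. by rewrite -kmevalC; apply: rational_in_kmeval. Qed.

Lemma rational_in0 : rational_in 0.
Proof. by rewrite -(rmorph0 iota); apply: rational_inC. Qed.

Lemma rational_in1 : rational_in 1.
Proof. by rewrite -(rmorph1 iota); apply: rational_inC. Qed.

Lemma rational_in_nat m : rational_in m%:R.
Proof. by rewrite -(rmorph_nat iota); apply: rational_inC. Qed.

Lemma rational_inXU i : rational_in (z i).
Proof. by rewrite -kmevalXU; apply: rational_in_kmeval. Qed.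

Lemma rational_inD x y : rational_in x -> rational_in y -> rational_in (x + y).
Proof.
move=> [p [q [nzq ->]]] [p' [q' [nzq' ->]]].
exists (p * q' + p' * q), (q * q'); rewrite rmorphM mulf_neq0 //; split=> //.
by rewrite rmorphD !rmorphM; field; rewrite nzq nzq'.
Qed.

Lemma rational_inM x y : rational_in x -> rational_in y -> rational_in (x * y).
Proof.
move=> [p [q [nzq ->]]] [p' [q' [nzq' ->]]].
exists (p * p'), (q * q'); rewrite rmorphM mulf_neq0 //; split=> //.
by rewrite !rmorphM; field; rewrite nzq nzq'.
Qed.

Lemma rational_inN x : rational_in x -> rational_in (- x).
Proof. by move=> [p [q [nzq ->]]]; exists (- p), q; rewrite rmorphN mulNr. Qed.

Lemma rational_inV x : rational_in x -> rational_in x^-1.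
Proof.
move=> [p [q [nzq ->]]]; have [p0|nzp] := eqVneq (kmeval p) 0.
  by rewrite p0 mul0r invr0; apply: rational_in0.
by exists q, p; rewrite invfM invrK mulrC.
Qed.

Lemma rational_inX x e : rational_in x -> rational_in (x ^+ e).
Proof.
move=> rx; elim: e => [|e IHe]; first by rewrite expr0; apply: rational_in1.
by rewrite exprS; apply: rational_inM.
Qed.

End Evaluation.

Lemma rational_in_comp n m (z : 'I_n -> L) (w : 'I_m -> L) (P : {mpoly k[m]}) :
  (forall i, rational_in z (w i)) -> rational_in z (kmeval w P).
Proof.
move=> rw; rewrite (mpolyE P) rmorph_sum /=.
apply: (big_ind (rational_in z)); [exact: rational_in0 | exact: rational_inD |].
move=> mu _; rewrite kmevalZ kmevalX; apply: rational_inM; first exact: rational_inC.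
apply: (big_ind (rational_in z)); [exact: rational_in1 | exact: rational_inM |].
by move=> i _; apply: rational_inX.
Qed.

Lemma generates_trans n m (t : 'I_m -> L) (z : 'I_n -> L) :
  generates iota t -> (forall i, rational_in z (t i)) -> generates iota z.
Proof.
move=> gen_t rt y; have [p [q [nzq ->]]] := gen_t y.
by apply: rational_inM; [|apply: rational_inV]; apply: rational_in_comp.
Qed.

End RationalFunctions.

(* Otherwise [/=] unfolds the evaluations exposed by the rmorphism lemmas. *)
Arguments kmeval : simpl never.

Ltac rational_in_closure :=
  repeat first [ assumption | apply: rational_inC | apply: rational_in_nat
               | apply: rational_inD | apply: rational_inM | apply: rational_inN
               | apply: rational_inV | apply: rational_inX ].

Section Boxed.
Variables (k : fieldType) (n : nat).
Implicit Types (p q : {mpoly k[n]}).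

Definition boxed (B : nat) p : bool :=
  all (fun m : 'X_{1..n} => [forall i, m i <= B]%N) (msupp p).

Lemma boxedP B p :
  reflect (forall m, m \in msupp p -> forall i, (m i <= B)%N) (boxed B p).
Proof. by apply: (iffP allP) => bp m /bp => [/forallP | /forallP]. Qed.

Lemma boxed_le B B' p : (B <= B')%N -> boxed B p -> boxed B' p.
Proof.
by move=> leBB' /boxedP bp; apply/boxedP => m /bp bm i; apply: leq_trans (bm i) leBB'.
Qed.

Lemma boxed0 B : boxed B 0.
Proof. by rewrite /boxed msupp0. Qed.

Lemma boxed1 B : boxed B 1.
Proof. by apply/boxedP => m; rewrite msupp1 inE => /eqP -> i; rewrite mnm0E. Qed.

Lemma boxedD B p q : boxed B p -> boxed B q -> boxed B (p + q).
Proof.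
move=> /boxedP bp /boxedP bq; apply/boxedP => m /msuppD_le.
by rewrite mem_cat => /orP[/bp | /bq].
Qed.

Lemma boxedZ B c p : boxed B p -> boxed B (c *: p).
Proof. by move=> /boxedP bp; apply/boxedP => m /msuppZ_le /bp. Qed.

Lemma boxedM B B' p q : boxed B p -> boxed B' q -> boxed (B + B') (p * q).
Proof.
move=> /boxedP bp /boxedP bq; apply/boxedP.
move=> m /msuppM_le /allpairsP[[m1 m2] /= [/bp bm1 /bq bm2 ->]] i.
by rewrite mnmDE leq_add.
Qed.

Lemma boxedXn B p e : boxed B p -> boxed (e * B) (p ^+ e).
Proof.
move=> bp; elim: e => [|e IHe]; first by rewrite expr0 boxed1.
by rewrite exprS mulSn boxedM.
Qed.

Lemma boxedX B (m : 'X_{1..n}) : (forall i, (m i <= B)%N) -> boxed B 'X_[m].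
Proof. by move=> bm; apply/boxedP => m'; rewrite msuppX inE => /eqP ->. Qed.

Lemma boxed_sum B (I : Type) (r : seq I) (P : pred I) (F : I -> {mpoly k[n]}) :
  (forall i, P i -> boxed B (F i)) -> boxed B (\sum_(i <- r | P i) F i).
Proof. by move=> bF; apply: (big_ind (boxed B)); [apply: boxed0 | apply: boxedD |]. Qed.

Lemma boxed_msize p : boxed (msize p) p.
Proof.
apply/boxedP => m /msize_mdeg_lt /ltnW le_m i; apply: leq_trans le_m.
by rewrite mdegE (bigD1 i) //= leq_addr.
Qed.

Lemma boxed_seq (s : seq {mpoly k[n]}) : exists B, all (boxed B) s.
Proof.
elim: s => [|p s [B bs]]; first by exists 0%N.
exists (msize p + B)%N; rewrite /= (boxed_le (leq_addr B _) (boxed_msize p)).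
by apply: sub_all _ bs => q; apply: boxed_le (leq_addl _ _).
Qed.

End Boxed.

Definition mnm2 (i j : nat) : 'X_{1..2} := [multinom nth 0%N [:: i; j] l | l < 2].

Lemma mnm2E0 i j : mnm2 i j ord0 = i. Proof. by rewrite mnmE. Qed.
Lemma mnm2E1 i j : mnm2 i j ord_max = j. Proof. by rewrite mnmE. Qed.

Lemma mnm2_eta (m : 'X_{1..2}) : m = mnm2 (m ord0) (m ord_max).
Proof.
by apply/mnmP => -[[|[|l]] lt_l2]; rewrite mnmE //=; congr (m _); apply: val_inj.
Qed.

Lemma mnm2_inj i j i' j' : (mnm2 i j == mnm2 i' j') = (i == i') && (j == j').
Proof.
apply/eqP/andP => [e | [/eqP-> /eqP->]] //.
by split; apply/eqP; [rewrite -(mnm2E0 i j) e mnm2E0 | rewrite -(mnm2E1 i j) e mnm2E1].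
Qed.

Section TwoVariables.
Variable k : fieldType.

Lemma kmeval_mnm2 (L : fieldType) (iota : {rmorphism k -> L}) (z : 'I_2 -> L) i j :
  kmeval iota z 'X_[mnm2 i j] = z ord0 ^+ i * z ord_max ^+ j.
Proof.
rewrite kmevalX big_ord_recl big_ord1 mnm2E0.
have -> : lift ord0 ord0 = ord_max :> 'I_2 by apply: val_inj.
by rewrite mnm2E1.
Qed.

Lemma boxed_eq0 T (p : {mpoly k[2]}) :
  boxed T p -> (forall i j : 'I_T.+1, p@_(mnm2 i j) = 0) -> p = 0.
Proof.
move=> bp p_box0; apply/mpolyP => m; rewrite mcoeff0.
have [/(boxedP _ _ bp) bm | m_notin] := boolP (m \in msupp p); last first.
  by apply/eqP; rewrite mcoeff_eq0.
have := p_box0 (Ordinal (bm ord0 : (m ord0 < T.+1)%N))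
               (Ordinal (bm ord_max : (m ord_max < T.+1)%N)).
by rewrite /= -mnm2_eta.
Qed.

Definition box_mpoly T (c : 'I_T.+1 * 'I_T.+1 -> k) : {mpoly k[2]} :=
  \sum_ij c ij *: 'X_[mnm2 ij.1 ij.2].

Lemma mcoeff_box_mpoly T (c : 'I_T.+1 * 'I_T.+1 -> k) (i j : 'I_T.+1) :
  (box_mpoly c)@_(mnm2 i j) = c (i, j).
Proof.
rewrite /box_mpoly raddf_sum (bigD1 (i, j)) //= mcoeffZ mcoeffX eqxx mulr1.
rewrite big1 ?addr0 // => -[i' j'] ne_ij; rewrite mcoeffZ mcoeffX mnm2_inj.
by rewrite !(inj_eq (@ord_inj _)) -xpair_eqE (negbTE ne_ij) mulr0.
Qed.

Lemma box_mpoly_eq0 T (c : 'I_T.+1 * 'I_T.+1 -> k) :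
  box_mpoly c = 0 -> forall ij, c ij = 0.
Proof. by move=> c0 [i j]; rewrite -mcoeff_box_mpoly c0 mcoeff0. Qed.

Lemma kmeval_box_mpoly (L : fieldType) (iota : {rmorphism k -> L}) (z : 'I_2 -> L)
    T (c : 'I_T.+1 * 'I_T.+1 -> k) :
  kmeval iota z (box_mpoly c) =
  \sum_ij iota (c ij) * (z ord0 ^+ ij.1 * z ord_max ^+ ij.2).
Proof.
by rewrite rmorph_sum /=; apply: eq_bigr => ij _; rewrite kmevalZ kmeval_mnm2.
Qed.

Lemma boxed_dependence T (U : finType) (F : U -> {mpoly k[2]}) :
  (forall u, boxed T (F u)) -> (T.+1 * T.+1 < #|U|)%N ->
  exists2 w : U -> k, (exists u, w u != 0) & \sum_u w u *: F u = 0.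
Proof.
move=> bF ltTU; pose V : finType := ('I_T.+1 * 'I_T.+1)%type.
pose A := \matrix_(r < #|U|, s < #|V|)
  (F (enum_val r))@_(mnm2 (enum_val s).1 (enum_val s).2).
have /rowV0Pn[v /sub_kermxP vA0 nz_v] : kermx A != 0.
  have cardV : #|V| = (T.+1 * T.+1)%N by rewrite card_prod card_ord.
  by rewrite -mxrank_eq0 mxrank_ker; move: (rank_leq_col A); rewrite {2}cardV; lia.
exists (fun u => v 0 (enum_rank u)).
  have [r nz_vr] : exists r, v 0 r != 0.
    apply/existsP; apply: contraR nz_v; rewrite negb_exists => /forallP v0.
    by apply/eqP/rowP => r; rewrite mxE; apply/eqP/negPn.
  by exists (enum_val r); rewrite enum_valK.
apply: (@boxed_eq0 T); first by apply: boxed_sum => u _; apply: boxedZ.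
move=> i j; have := congr1 (fun W : 'rV_#|V| => W 0 (enum_rank ((i, j) : V))) vA0.
rewrite !mxE (reindex (@enum_rank U)) /=; last exact/onW_bij/enum_rank_bij.
move <-; rewrite raddf_sum /=; apply: eq_bigr => u _.
by rewrite mcoeffZ !mxE !enum_rankK.
Qed.

End TwoVariables.

Lemma box_count e T N :
  (e <= T)%N -> (2 * e * T <= N * N)%N ->
  (T.+1 * T.+1 < N.+1 * N.+1 + (T - e).+1 * (T - e).+1)%N.
Proof.
move=> /subnK <-; rewrite addnK; move: (T - e)%N => S le_eSN.
have : (2 * e <= e * e + 1)%N by case: e {le_eSN} => //= e; nia.
nia.
Qed.

Section Transcendence.
Variables (k L : fieldType) (iota : {rmorphism k -> L}).

Definition cleared N (p0 q0 p1 q1 : {mpoly k[2]}) (ij : 'I_N.+1 * 'I_N.+1) :=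
  p0 ^+ ij.1 * q0 ^+ (N - ij.1) * (p1 ^+ ij.2 * q1 ^+ (N - ij.2)).

Lemma boxed_cleared M N p0 q0 p1 q1 (ij : 'I_N.+1 * 'I_N.+1) :
  all (boxed M) [:: p0; q0; p1; q1] -> boxed (2 * N * M) (cleared p0 q0 p1 q1 ij).
Proof.
case/and5P=> bp0 bq0 bp1 bq1 _; case: ij => i j /=.
have le_iN : (i <= N)%N by rewrite -ltnS.
have le_jN : (j <= N)%N by rewrite -ltnS.
have -> : (2 * N * M = i * M + (N - i) * M + (j * M + (N - j) * M))%N.
  by rewrite -!mulnDl !subnKC // addnn -mul2n.
by apply: boxedM; apply: boxedM; apply: boxedXn.
Qed.

Lemma kmeval_cleared_sum (y z : 'I_2 -> L) N p0 q0 p1 q1 (c : 'I_N.+1 * 'I_N.+1 -> k) :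
  kmeval iota z p0 = y ord0 * kmeval iota z q0 ->
  kmeval iota z p1 = y ord_max * kmeval iota z q1 ->
  kmeval iota z (\sum_ij c ij *: cleared p0 q0 p1 q1 ij) =
  (kmeval iota z q0 * kmeval iota z q1) ^+ N * kmeval iota y (box_mpoly c).
Proof.
move=> p0E p1E; rewrite kmeval_box_mpoly mulr_sumr rmorph_sum /=.
apply: eq_bigr => -[i j] _ /=.
rewrite kmevalZ /cleared /= !rmorphM !rmorphXn /= p0E p1E.
have splitN (x : L) (l : 'I_N.+1) : x ^+ N = x ^+ l * x ^+ (N - l).
  by rewrite -exprD subnKC // -ltnS.
by rewrite !exprMn (splitN _ i) (splitN _ j); ring.
Qed.

Lemma generators_alg_indep (y z : 'I_2 -> L) :
  alg_indep iota y -> generates iota z -> alg_indep iota z.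
Proof.
move=> indep_y gen_z Q Qz0; apply/eqP/negPn/negP => nzQ.
have [p0 [q0 [nz_q0 y0E]]] := gen_z (y ord0).
have [p1 [q1 [nz_q1 y1E]]] := gen_z (y ord_max).
have [B /and5P[bp0 bq0 bp1 bq1 /andP[bQ _]]] := boxed_seq [:: p0; q0; p1; q1; Q].
(* N is chosen so that 2 * M * T = N * N, as [box_count] requires. *)
pose M := B.+1; pose N := (4 * M * M)%N; pose T := (2 * N * M)%N; pose K := (T - M)%N.
have bM : all (boxed M) [:: p0; q0; p1; q1].
  by apply/and5P; split; rewrite // (boxed_le (leqnSn B)).
pose U : finType := ('I_N.+1 * 'I_N.+1 + 'I_K.+1 * 'I_K.+1)%type.
pose F (u : U) := match u with
  | inl ij => cleared p0 q0 p1 q1 ij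
  | inr ij => Q * 'X_[mnm2 ij.1 ij.2] end.
have bF u : boxed T (F u).
  case: u => [ij | [i j]] /=; first exact: boxed_cleared.
  have -> : T = (M + K)%N by rewrite subnKC // /T /N; nia.
  apply: boxedM; first exact: boxed_le (leqnSn B) bQ.
  by apply: boxedX => l; rewrite mnmE; case: l => -[|[|l]] //= _; rewrite -ltnS.
have [|w [u nz_wu] wF0] := boxed_dependence bF.
  rewrite card_sum !card_prod !card_ord; apply: box_count; rewrite /T /N; nia.
rewrite big_sumType /= in wF0.
have QX_sum :
    \sum_ij w (inr ij) *: (Q * 'X_[mnm2 ij.1 ij.2]) = Q * box_mpoly (w \o inr).
  by rewrite /box_mpoly mulr_sumr; apply: eq_bigr => ij _; rewrite scalerAr.
have wl0 ij : w (inl ij) = 0.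
  apply: (box_mpoly_eq0 (c := w \o inl)); apply: indep_y; apply/eqP.
  have := congr1 (kmeval iota z) wF0.
  rewrite QX_sum rmorphD rmorphM rmorph0 /= [kmeval _ _ Q]Qz0 mul0r addr0.
  rewrite (kmeval_cleared_sum (y := y)) ?y0E ?y1E ?mulfVK // => /eqP.
  by rewrite mulf_eq0 expf_eq0 mulf_eq0 (negbTE nz_q0) (negbTE nz_q1) andbF.
have wr0 ij : w (inr ij) = 0.
  apply: (box_mpoly_eq0 (c := w \o inr)); apply/eqP.
  move: wF0; rewrite QX_sum big1 ?add0r => [/eqP|ij' _]; last by rewrite wl0 scale0r.
  by rewrite mulf_eq0 (negbTE nzQ).
by move: nz_wu; case: u => ij; rewrite ?wl0 ?wr0 eqxx.
Qed.

End Transcendence.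

Section Parametrization.
Variables (F : fieldType) (a b c d x0 y0 X1 Y1 t1 t2 t3 t4 : F).
Hypotheses (two_neq0 : 2 != 0 :> F) (a_neq0 : a != 0) (b_neq0 : b != 0).
Hypotheses (x0y0_on : x0 ^+ 2 - a * y0 ^+ 2 = b) (t1t2_on : t1 ^+ 2 - a * t2 ^+ 2 = b).
Hypothesis t3t4_on : t3 ^+ 2 - a * t4 ^+ 2 = 2 * c * t1 + d.
Hypotheses (A_neq0 : 2 * c * x0 + d != 0).
Hypothesis X1Y1_on : X1 ^+ 2 - a * Y1 ^+ 2 = 2 * c * x0 + d.
Hypothesis t2y0_neq0 : t2 + y0 != 0.

Definition chord_slope := (t1 + x0) / (t2 + y0).
Local Notation s := chord_slope.

(* With r a square root of a: twist1 + twist2 r = (t3 + t4 r) (s + r) and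
   quot1 + quot2 r = (twist1 + twist2 r) / (X1 + Y1 r). *)
Definition twist1 := t3 * s + a * t4.
Definition twist2 := t3 + s * t4.
Definition quot1 := (twist1 * X1 - a * twist2 * Y1) / (2 * c * x0 + d).
Definition quot2 := (twist2 * X1 - twist1 * Y1) / (2 * c * x0 + d).

Definition slope_shift := - (2 * a * c * y0) / (2 * c * x0 + d).
Definition quot_disc := a * (2 * c * x0 - d) / (2 * c * x0 + d) - slope_shift ^+ 2.
Definition quot_sum := quot1 + s + slope_shift.

Lemma t1_chord_slope : t1 = s * (t2 + y0) - x0.
Proof. by rewrite /chord_slope divfK // addrK. Qed.

Lemma chord_slope_eq : (t2 + y0) * (s ^+ 2 - a) = 2 * (s * x0 - a * y0).
Proof.
apply: (mulfI t2y0_neq0); apply/eqP; rewrite -subr_eq0; apply/eqP.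
transitivity ((s * (t2 + y0) - x0) ^+ 2 - a * (t2 + y0 - y0) ^+ 2
              - (x0 ^+ 2 - a * y0 ^+ 2)); first by ring.
by rewrite -t1_chord_slope addrK t1t2_on x0y0_on subrr.
Qed.

Lemma chord_slope_sqr_neq : s ^+ 2 - a != 0.
Proof.
apply/negP => /eqP sa0.
have sx0 : s * x0 - a * y0 = 0.
  move: chord_slope_eq; rewrite sa0 mulr0 => /esym/eqP.
  by rewrite mulf_eq0 (negbTE two_neq0) => /eqP.
have : a * b = (s * x0 - a * y0) * (s * x0 + a * y0) - x0 ^+ 2 * (s ^+ 2 - a).
  by rewrite -x0y0_on; ring.
rewrite sx0 sa0 mul0r mulr0 subr0 => /eqP.
by rewrite mulf_eq0 (negbTE a_neq0) (negbTE b_neq0).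
Qed.

Lemma t2_param : t2 = 2 * (s * x0 - a * y0) / (s ^+ 2 - a) - y0.
Proof. by rewrite -chord_slope_eq mulfK ?chord_slope_sqr_neq // addrK. Qed.

Lemma t1_param : t1 = s * (2 * (s * x0 - a * y0) / (s ^+ 2 - a)) - x0.
Proof. by rewrite -chord_slope_eq mulfK ?chord_slope_sqr_neq // -t1_chord_slope. Qed.

Lemma t3_param : t3 = (twist1 * s - a * twist2) / (s ^+ 2 - a).
Proof.
by apply: (canRL (mulfK chord_slope_sqr_neq)); rewrite /twist1 /twist2; ring.
Qed.

Lemma t4_param : t4 = (twist2 * s - twist1) / (s ^+ 2 - a).
Proof.
by apply: (canRL (mulfK chord_slope_sqr_neq)); rewrite /twist1 /twist2; ring.
Qed.

Lemma twist1_quot : twist1 = quot1 * X1 + a * quot2 * Y1.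
Proof. by rewrite /quot1 /quot2 -X1Y1_on; field; rewrite X1Y1_on. Qed.

Lemma twist2_quot : twist2 = quot1 * Y1 + quot2 * X1.
Proof. by rewrite /quot1 /quot2 -X1Y1_on; field; rewrite X1Y1_on. Qed.

Lemma quot_norm : quot1 ^+ 2 - a * quot2 ^+ 2 = (s + slope_shift) ^+ 2 + quot_disc.
Proof.
have twist_norm : twist1 ^+ 2 - a * twist2 ^+ 2
    = (2 * c * x0 + d) * s ^+ 2 - 4 * a * c * y0 * s + a * (2 * c * x0 - d).
  transitivity ((t3 ^+ 2 - a * t4 ^+ 2) * (s ^+ 2 - a)).
    by rewrite /twist1 /twist2; ring.
  rewrite t3t4_on t1_chord_slope.
  transitivity (2 * c * s * ((t2 + y0) * (s ^+ 2 - a))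
                - (2 * c * x0 - d) * (s ^+ 2 - a)); first by ring.
  by rewrite chord_slope_eq; ring.
transitivity ((twist1 ^+ 2 - a * twist2 ^+ 2) / (2 * c * x0 + d)).
  by rewrite /quot1 /quot2 -X1Y1_on; field; rewrite X1Y1_on.
by rewrite twist_norm /quot_disc /slope_shift; field.
Qed.

Lemma quot_sum_factor :
  (quot1 - s - slope_shift) * quot_sum = a * quot2 ^+ 2 + quot_disc.
Proof.
transitivity (quot1 ^+ 2 - a * quot2 ^+ 2 - (s + slope_shift) ^+ 2 + a * quot2 ^+ 2).
  by rewrite /quot_sum; ring.
by rewrite quot_norm; ring.
Qed.

Lemma quot_sum_neq0_param : quot_sum != 0 ->
  quot1 = (quot_sum + (a * quot2 ^+ 2 + quot_disc) / quot_sum) / 2 /\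
  s = (quot_sum - (a * quot2 ^+ 2 + quot_disc) / quot_sum) / 2 - slope_shift.
Proof.
move=> nz_sum; rewrite -quot_sum_factor mulfK //.
by split; rewrite /quot_sum; field.
Qed.

Lemma quot_sum_eq0_param : quot_sum = 0 ->
  a * quot2 ^+ 2 + quot_disc = 0 /\ quot1 = - (s + slope_shift).
Proof.
move=> sum0; rewrite -quot_sum_factor sum0 mulr0; split=> //.
by apply/eqP; rewrite -subr_eq0 opprK addrA -/quot_sum sum0.
Qed.

End Parametrization.

Section NormForm.
Variables (k : fieldType) (a : k).
Hypothesis a_nonsquare : ~ exists r : k, r ^+ 2 = a.

Lemma nonsquare_neq0 : a != 0.
Proof. by apply/eqP => a0; apply: a_nonsquare; exists 0; rewrite a0 expr0n. Qed.

Lemma C1_norm_form (e : k) : C1_field k -> e != 0 ->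
  exists x y : k, x ^+ 2 - a * y ^+ 2 = e.
Proof.
move=> C1k e_neq0.
pose i0 : 'I_3 := inord 0; pose i1 : 'I_3 := inord 1; pose i2 : 'I_3 := inord 2.
pose f : {mpoly k[3]} := 'X_i0 ^+ 2 - a *: 'X_i1 ^+ 2 - e *: 'X_i2 ^+ 2.
have sqX_homog i : 'X_i ^+ 2 \is [in k[3], 2.-homog].
  by apply: (dhomogMn (d := 1)); rewrite dhomogX /= mdeg1.
have f_homog : f \is 2.-homog by rewrite !rpredB ?rpredZ.
have [v [[i nz_vi] fv0]] := C1k 3%N 2%N f isT isT f_homog.
have {fv0} v_norm : v i0 ^+ 2 - a * v i1 ^+ 2 = e * v i2 ^+ 2.
  by apply/eqP; rewrite -subr_eq0 -fv0 /f !rmorphB /= !mevalZ !rmorphXn /= !mevalXU.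
have [v2_0 | v2_neq0] := eqVneq (v i2) 0; last first.
  exists (v i0 / v i2), (v i1 / v i2).
  by rewrite !expr_div_n mulrA -mulrBl v_norm mulfK ?expf_neq0.
move: v_norm; rewrite v2_0 expr0n mulr0 => /eqP; rewrite subr_eq0 => /eqP v_sq.
have v1_0 : v i1 = 0.
  have [//|v1_neq0] := eqVneq (v i1) 0; case: a_nonsquare; exists (v i0 / v i1).
  by rewrite expr_div_n v_sq mulfK ?expf_neq0.
have v0_0 : v i0 = 0 by apply/eqP; rewrite -sqrf_eq0 v_sq v1_0 expr0n mulr0.
suff : v i = 0 by move/eqP: nz_vi.
case: i {nz_vi} => -[|[|[|//]]] lt_i3;
  [rewrite -v0_0 | rewrite -v1_0 | rewrite -v2_0];
  by congr v; apply: val_inj; rewrite /= inordK.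
Qed.

Lemma conic_point_off_line (b c d : k) : C1_field k -> 2 != 0 :> k -> b != 0 ->
  c != 0 \/ d != 0 ->
  exists x0 y0 : k, x0 ^+ 2 - a * y0 ^+ 2 = b /\ 2 * c * x0 + d != 0.
Proof.
move=> C1k two_neq0 b_neq0 cd_neq0.
have [x0 [y0 x0y0_on]] := C1_norm_form C1k b_neq0.
have [x0_on | x0_off] := eqVneq (2 * c * x0 + d) 0; last by exists x0, y0.
have [mx0_on | mx0_off] := eqVneq (2 * c * - x0 + d) 0; last first.
  by exists (- x0), y0; rewrite sqrrN.
have d0 : d = 0.
  have : 2 * d = 2 * c * x0 + d + (2 * c * - x0 + d) by ring.
  by rewrite x0_on mx0_on addr0 => /eqP; rewrite mulf_eq0 (negbTE two_neq0) => /eqP.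
have c_neq0 : c != 0 by case: cd_neq0; rewrite // d0 eqxx.
have x0_0 : x0 = 0.
  move/eqP: x0_on; rewrite d0 addr0 !mulf_eq0 (negbTE two_neq0) (negbTE c_neq0).
  by move/eqP.
have y0_neq0 : y0 != 0.
  by apply: contra_neq b_neq0 => y0_0; rewrite -x0y0_on x0_0 y0_0 expr0n mulr0 subrr.
have a_neq1 : 1 - a != 0.
  by rewrite subr_eq0; apply/eqP => a_1; apply: a_nonsquare; exists 1; rewrite expr1n.
(* the second intersection of the conic with the line x = a (y - y0) *)
exists (- (2 * a * y0) / (1 - a)), (- ((1 + a) * y0) / (1 - a)); split.
  by rewrite -x0y0_on x0_0; field.
by rewrite d0 addr0 !mulf_neq0 ?invr_eq0 ?oppr_eq0 ?mulf_neq0 ?nonsquare_neq0.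
Qed.

End NormForm.

Definition vec2 (L : fieldType) (u v : L) : 'I_2 -> L := fun i => nth 0 [:: u; v] i.

Section Rationality.
Variables (k L : fieldType) (iota : {rmorphism k -> L}).
Variables (a b c d x0 y0 X1 Y1 : k) (t1 t2 t3 t4 : L) (y : 'I_2 -> L).
Hypotheses (two_neq0 : 2 != 0 :> k) (a_neq0 : a != 0) (b_neq0 : b != 0).
Hypotheses (x0y0_on : x0 ^+ 2 - a * y0 ^+ 2 = b) (A_neq0 : 2 * c * x0 + d != 0).
Hypothesis X1Y1_on : X1 ^+ 2 - a * Y1 ^+ 2 = 2 * c * x0 + d.
Hypothesis t_gen : generates iota (fun i : 'I_4 => nth 0 [:: t1; t2; t3; t4] i).
Hypothesis y_indep : alg_indep iota y.
Hypothesis t1t2_on : t1 ^+ 2 - iota a * t2 ^+ 2 = iota b.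
Hypothesis t3t4_on : t3 ^+ 2 - iota a * t4 ^+ 2 = iota (2 * c) * t1 + iota d.

Let two_L : 2 != 0 :> L. Proof. by rewrite -(rmorph_nat iota) fmorph_eq0. Qed.
Let a_L : iota a != 0. Proof. by rewrite fmorph_eq0. Qed.
Let b_L : iota b != 0. Proof. by rewrite fmorph_eq0. Qed.
Let x0y0_L : iota x0 ^+ 2 - iota a * iota y0 ^+ 2 = iota b.
Proof. by rewrite -x0y0_on rmorphB rmorphXn rmorphM rmorphXn. Qed.
Let t3t4_L : t3 ^+ 2 - iota a * t4 ^+ 2 = 2 * iota c * t1 + iota d.
Proof. by rewrite t3t4_on rmorphM rmorph_nat. Qed.
Let A_L : 2 * iota c * iota x0 + iota d != 0.
Proof. by rewrite -(rmorph_nat iota) -!rmorphM -rmorphD fmorph_eq0. Qed.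
Let X1Y1_L : iota X1 ^+ 2 - iota a * iota Y1 ^+ 2 = 2 * iota c * iota x0 + iota d.
Proof.
rewrite -(rmorph_nat iota) -!rmorphM -rmorphD -X1Y1_on.
by rewrite rmorphB rmorphXn rmorphM rmorphXn.
Qed.

Local Notation s := (chord_slope (iota x0) (iota y0) t1 t2).
Local Notation z1 :=
  (quot1 (iota a) (iota c) (iota d) (iota x0) (iota y0) (iota X1) (iota Y1) t1 t2 t3 t4).
Local Notation z2 :=
  (quot2 (iota a) (iota c) (iota d) (iota x0) (iota y0) (iota X1) (iota Y1) t1 t2 t3 t4).
Local Notation zsum :=
  (quot_sum (iota a) (iota c) (iota d) (iota x0) (iota y0) (iota X1) (iota Y1) t1 t2 t3 t4).

Lemma generated_relation_trivial (z : 'I_2 -> L) (P : {mpoly k[2]}) m :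
  generates iota z -> kmeval iota z P = 0 -> P@_m = 0.
Proof.
by move=> gen_z Pz0; rewrite (generators_alg_indep y_indep gen_z Pz0) mcoeff0.
Qed.

Lemma generates_of_t (z : 'I_2 -> L) :
  rational_in iota z t1 -> rational_in iota z t2 -> rational_in iota z t3 ->
  rational_in iota z t4 -> generates iota z.
Proof.
by move=> r1 r2 r3 r4; apply: (generates_trans t_gen) => -[[|[|[|[|//]]]] lt_i4].
Qed.

Lemma t2y0_neq0 : t2 + iota y0 != 0.
Proof.
apply/negP => /eqP t2y0_0.
have t2E : t2 = iota (- y0) by rewrite rmorphN; apply/eqP; rewrite -addr_eq0 t2y0_0.
have [e t1E] : exists e, t1 = iota e.
  have : (t1 - iota x0) * (t1 + iota x0) = 0.
    rewrite -subr_sqr -[t1 ^+ 2](subrK (iota a * t2 ^+ 2)) t1t2_on -x0y0_L.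
    by rewrite t2E rmorphN; ring.
  move/eqP; rewrite mulf_eq0 => /orP[/eqP t1x0 | /eqP t1x0].
    by exists x0; apply/eqP; rewrite -subr_eq0 t1x0.
  by exists (- x0); rewrite rmorphN; apply/eqP; rewrite -addr_eq0 t1x0.
pose P : {mpoly k[2]} :=
  'X_[mnm2 2 0] - a *: 'X_[mnm2 0 2] - (2 * c * e + d) *: 'X_[mnm2 0 0].
have gen34 : generates iota (vec2 t3 t4).
  apply: generates_of_t; rewrite ?t1E ?t2E; try exact: rational_inC.
    exact: (rational_inXU _ _ ord0).
  exact: (rational_inXU _ _ ord_max).
have Pz0 : kmeval iota (vec2 t3 t4) P = 0.
  rewrite !rmorphB /= !kmevalZ !kmeval_mnm2 /= !expr0 !mulr1 mul1r t3t4_L t1E.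
  by rewrite rmorphD !rmorphM rmorph_nat subrr.
have := generated_relation_trivial (mnm2 2 0) gen34 Pz0.
rewrite !mcoeffB !mcoeffZ !mcoeffX !mnm2_inj /= !mulr0 !subr0.
by move/eqP; rewrite oner_eq0.
Qed.

Lemma generates_param (z : 'I_2 -> L) :
  rational_in iota z s -> rational_in iota z z1 -> rational_in iota z z2 ->
  generates iota z.
Proof.
move=> rs rz1 rz2.
have rw1 : rational_in iota z (twist1 (iota a) (iota x0) (iota y0) t1 t2 t3 t4).
  by rewrite (twist1_quot _ _ _ _ _ A_L X1Y1_L); rational_in_closure.
have rw2 : rational_in iota z (twist2 (iota x0) (iota y0) t1 t2 t3 t4).
  by rewrite (twist2_quot _ _ _ _ _ A_L X1Y1_L); rational_in_closure.
have t2y0 := t2y0_neq0.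
apply: generates_of_t.
- by rewrite (t1_param two_L a_L b_L x0y0_L t1t2_on t2y0); rational_in_closure.
- by rewrite (t2_param two_L a_L b_L x0y0_L t1t2_on t2y0); rational_in_closure.
- by rewrite (t3_param t3 t4 two_L a_L b_L x0y0_L t1t2_on t2y0); rational_in_closure.
- by rewrite (t4_param t3 t4 two_L a_L b_L x0y0_L t1t2_on t2y0); rational_in_closure.
Qed.

Lemma quot_sum_neq0 : zsum != 0.
Proof.
apply/eqP => zsum0.
have [z2_rel z1E] :=
  quot_sum_eq0_param x0y0_L t1t2_on t3t4_L A_L X1Y1_L t2y0_neq0 zsum0.
have rs := rational_inXU iota (vec2 s z2) ord0.
have rz2 := rational_inXU iota (vec2 s z2) ord_max.
have gen : generates iota (vec2 s z2).
  by apply: generates_param => //; rewrite z1E /slope_shift; rational_in_closure.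
pose P : {mpoly k[2]} := a *: 'X_[mnm2 0 2] + quot_disc a c d x0 y0 *: 'X_[mnm2 0 0].
have Pz0 : kmeval iota (vec2 s z2) P = 0.
  rewrite rmorphD /= !kmevalZ !kmeval_mnm2 /= !expr0 !mul1r mulr1 -[RHS]z2_rel.
  rewrite /quot_disc /slope_shift.
  by rewrite !(rmorph_nat, rmorphB, rmorphD, rmorphN, fmorph_div, rmorphXn, rmorphM).
have := generated_relation_trivial (mnm2 0 2) gen Pz0.
by rewrite mcoeffD !mcoeffZ !mcoeffX !mnm2_inj /= mulr1 mulr0 addr0; apply/eqP.
Qed.

Theorem k_rational_of_points : k_rational iota.
Proof.
have [z1E sE] :=
  quot_sum_neq0_param two_L x0y0_L t1t2_on t3t4_L A_L X1Y1_L t2y0_neq0 quot_sum_neq0.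
have rzsum := rational_inXU iota (vec2 zsum z2) ord0.
have rz2 := rational_inXU iota (vec2 zsum z2) ord_max.
have gen : generates iota (vec2 zsum z2).
  apply: generates_param => //; last by rewrite z1E; rational_in_closure.
  by rewrite sE /slope_shift; rational_in_closure.
by exists 2%N, (vec2 zsum z2); split; first exact: generators_alg_indep y_indep gen.
Qed.

End Rationality.

Theorem lemma1p8 (k : fieldType) (L : fieldType) (iota : {rmorphism k -> L})
    (a b c d : k) (t1 t2 t3 t4 : L) :
  infinite_field k -> C1_field k -> (2%:R : k) != 0 ->
  ~ GRing.closed_field_axiom k ->
  ~ (exists y : k, y ^+ 2 = a) -> b != 0 -> (c != 0 \/ d != 0) ->
  generates iota (fun i : 'I_4 => nth 0 [:: t1; t2; t3; t4] i) -> trdeg_eq iota 2 ->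
  t1 ^+ 2 - iota a * t2 ^+ 2 = iota b ->
  t3 ^+ 2 - iota a * t4 ^+ 2 = iota (2%:R * c) * t1 + iota d ->
  k_rational iota.
Proof.
move=> _ C1k two_neq0 _ a_nonsq b_neq0 cd_neq0 t_gen [[y y_indep] _] t1t2_on t3t4_on.
have [x0 [y0 [x0y0_on A_neq0]]] :=
  conic_point_off_line a_nonsq C1k two_neq0 b_neq0 cd_neq0.
have [X1 [Y1 X1Y1_on]] := C1_norm_form a_nonsq C1k A_neq0.
exact: (k_rational_of_points two_neq0 (nonsquare_neq0 a_nonsq) b_neq0 x0y0_on A_neq0
          X1Y1_on t_gen y_indep t1t2_on t3t4_on).
Qed.
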